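(* Let $t>0$ and $k\ge 1$ be constants, and let $p_0,p_1,p_2,p_3$ be real numbers with $0<p_i<1$ and $\sum_{i=0}^{3}p_i=1$. Define $T(n,r)$ for real $n\ge 0$ and integers $r\ge 0$ by $$T(n,r)=\begin{cases}1 & \text{if } n\le t k^r,\\ 1+\sum_{i=0}^{3} T\big(p_i(n-tk^r),\,r+1\big) & \text{if } n> t k^r.\end{cases}$$ Then, as $N\to\infty$, $T(N,0)\in\Theta(N^s)$, where $s$ is a real number with $0< s\le \frac{\log 4}{\log 4k}$ (namely the solution of $\sum_{i=0}^{3}p_i^s=k^s$).
   Context: $T(N,0)$ is the asymptotic space (number of counters) used by a DN-tree with parameters $k$ and $t$ after recording $N$ extent accesses: a tree vertex at level $r$ saturates at threshold $tk^r$, after which further accesses are distributed among its four children with probabilities $p_0,\dots,p_3$. The parameters $t,k,p_i$ are fixed as $N\to\infty$. *)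

From Stdlib Require Import Reals.
Open Scope R_scope.

(* DN-tree space recursion T(n,r), with an explicit fuel argument so that the
   recursion on real n is structural.  [Tf] returns 1 when fuel runs out;
   [T] supplies enough fuel (see below), so [T] satisfies exactly
     T(n,r) = 1                                   if n <= t k^r
     T(n,r) = 1 + sum_{i=0}^3 T(p_i (n - t k^r), r+1)   if n > t k^r
   whenever t > 0, k >= 1, 0 < p_i < 1. *)
Fixpoint Tf (fuel : nat) (t k : R) (p : nat -> R) (n : R) (r : nat) : R :=
  match fuel with
  | O => 1
  | S f =>
      if Rle_dec n (t * k ^ r) then 1
      else 1 + sum_f_R0 (fun i => Tf f t k p (p i * (n - t * k ^ r)) (S r)) 3
  end.

(* Each recursive step decreases n by at least t (since k >= 1 and p_i < 1),
   so after more than n/t steps the argument is <= 0 <= t k^r.  Hence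
   up(n/t) + 1 units of fuel always suffice. *)
Definition T (t k : R) (p : nat -> R) (n : R) (r : nat) : R :=
  Tf (Z.to_nat (up (n / t)) + 1) t k p n r.

From Stdlib Require Import Reals Lra Lia Psatz ZArith.
Open Scope R_scope.

(* The exponent [s] is a zero of [k^s - sum_i p_i^s], which is [-3] at [0] and
   [k - 1 >= 0] at [1]; the power-mean inequality [sum_i p_i^s <= 4^(1-s)]
   turns [k^s = sum_i p_i^s] into [s <= ln 4 / ln (4k)].

   In the rescaled variable [x = n / k^r] a split node at [x] has children at
   [(p_i/k) (x - t)], and [sum_i (p_i/k)^s = 1].  Hence, by induction on the
   recursion, subadditivity of [x |-> x^s] gives [T(n,r) >= (n/(t k^r))^s],
   while [T(n,r) <= A x^s - 1/3] holds for [x] bounded away from [0]: children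
   of a node with [x > t + 1] stay bounded away from [0], and nodes with
   [x <= t + 1] have a subtree of bounded depth, hence of bounded size. *)

(* Junk value: [ln x = 0] for [x <= 0]. *)
Lemma Rpower_nonpos x s : x <= 0 -> Rpower x s = 1.
Proof.
  intros Hx. unfold Rpower, ln.
  destruct (Rlt_dec 0 x); [exfalso; lra|]. rewrite Rmult_0_r. apply exp_0.
Qed.

Lemma Rpower_1_l s : Rpower 1 s = 1.
Proof. unfold Rpower. rewrite ln_1, Rmult_0_r. apply exp_0. Qed.

Lemma exp_le_compat x y : x <= y -> exp x <= exp y.
Proof. intros [Hlt|<-]; [left; apply exp_increasing|]; lra. Qed.

Lemma ln_le_compat x y : 0 < x -> x <= y -> ln x <= ln y.
Proof. intros Hx [Hlt|<-]; [left; apply ln_increasing|]; lra. Qed.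

Lemma Rdiv_le_l a b c : 0 < b -> a <= c * b -> a / b <= c.
Proof.
  intros Hb H. apply Rmult_le_reg_r with b; [lra|].
  unfold Rdiv. rewrite Rmult_assoc, Rinv_l, Rmult_1_r; lra.
Qed.

Lemma Rdiv_lt_r a b c : 0 < b -> c * b < a -> c < a / b.
Proof.
  intros Hb H. apply Rmult_lt_reg_r with b; [lra|].
  unfold Rdiv. rewrite Rmult_assoc, Rinv_l, Rmult_1_r; lra.
Qed.

Lemma Rpower_le_1 x s : x <= 1 -> 0 <= s -> Rpower x s <= 1.
Proof.
  intros Hx Hs. destruct (Rle_lt_dec x 0) as [Hneg|Hpos].
  - rewrite Rpower_nonpos; lra.
  - rewrite <- (Rpower_1_l s). apply Rle_Rpower_l; lra.
Qed.

Lemma Rpower_ge_self y s : 0 < y <= 1 -> s <= 1 -> y <= Rpower y s.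
Proof.
  intros Hy Hs. unfold Rpower. rewrite <- (exp_ln y) at 1 by lra.
  apply exp_le_compat.
  assert (ln y <= 0) by (rewrite <- ln_1; apply ln_le_compat; lra). nra.
Qed.

(* Weighted AM-GM [x^s 1^(1-s) <= s x + (1-s)], from the tangent lines
   [exp u >= 1 + u] at [(1-s) ln x] and at [-s ln x]. *)
Lemma Rpower_le_affine x s : 0 < x -> 0 <= s <= 1 -> Rpower x s <= 1 + s * (x - 1).
Proof.
  intros Hx Hs. set (L := ln x).
  pose proof (exp_ineq1_le ((1 - s) * L)) as Hup.
  pose proof (exp_ineq1_le (- (s * L))) as Hdown.
  assert (Eup : exp ((1 - s) * L) * exp (s * L) = exp L)
    by (rewrite <- exp_plus; f_equal; ring).
  assert (Edown : exp (- (s * L)) * exp (s * L) = 1)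
    by (rewrite <- exp_plus, <- exp_0; f_equal; ring).
  assert (Ex : exp L = x) by (apply exp_ln; lra).
  unfold Rpower. fold L. rewrite <- Ex.
  set (G := exp (s * L)) in *. assert (HG : 0 < G) by apply exp_pos.
  assert (Hup' : G * (1 + (1 - s) * L) <= exp L) by (rewrite <- Eup; nra).
  assert (Hdown' : G * (1 - s * L) <= 1) by (rewrite <- Edown; nra).
  nra.
Qed.

Lemma Rpower_plus_le a b s : 0 < a -> 0 < b -> 0 <= s <= 1 ->
  Rpower (a + b) s <= Rpower a s + Rpower b s.
Proof.
  intros Ha Hb Hs. set (c := a + b).
  assert (Hc : 0 < c) by (unfold c; lra).
  assert (Ha' : a / c <= Rpower (a / c) s).
  { apply Rpower_ge_self; [split|lra].
    - apply Rdiv_lt_0_compat; lra.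
    - apply Rdiv_le_l; unfold c; lra. }
  assert (Hb' : b / c <= Rpower (b / c) s).
  { apply Rpower_ge_self; [split|lra].
    - apply Rdiv_lt_0_compat; lra.
    - apply Rdiv_le_l; unfold c; lra. }
  assert (Hsum : a / c + b / c = 1) by (unfold c; field; lra).
  assert (Ea : a = c * (a / c)) by (field; lra).
  assert (Eb : b = c * (b / c)) by (field; lra).
  rewrite Ea, Eb, <- !Rpower_mult_distr by (try apply Rdiv_lt_0_compat; lra).
  assert (0 < Rpower c s) by apply exp_pos. nra.
Qed.

Lemma sum_affine (p : nat -> R) (a b : R) m :
  sum_f_R0 (fun i => a + b * p i) m = a * INR (S m) + b * sum_f_R0 p m.
Proof.
  rewrite sum_plus, sum_cte, scal_sum. f_equal. apply sum_eq. intros; ring.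
Qed.

Lemma sum_Rpower_le (p : nat -> R) m s : 0 <= s <= 1 ->
  (forall i, (i <= m)%nat -> 0 < p i) -> sum_f_R0 p m = 1 ->
  Rpower (INR (S m)) s * sum_f_R0 (fun i => Rpower (p i) s) m <= INR (S m).
Proof.
  intros Hs Hp Hsum. set (c := INR (S m)).
  assert (Hc : 0 < c) by apply lt_0_INR, Nat.lt_0_succ.
  rewrite scal_sum.
  apply Rle_trans with (sum_f_R0 (fun i => (1 - s) + s * c * p i) m).
  - apply sum_Rle. intros i Hi.
    rewrite Rmult_comm, Rpower_mult_distr by (try exact (Hp i Hi); lra).
    pose proof (Rpower_le_affine (c * p i) s) as H.
    specialize (H (Rmult_lt_0_compat _ _ Hc (Hp i Hi)) Hs). lra.
  - rewrite sum_affine, Hsum. fold c. lra.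
Qed.

Lemma continuity_sum_Rpower (p : nat -> R) m :
  continuity (fun s => sum_f_R0 (fun i => Rpower (p i) s) m).
Proof.
  induction m as [|m IH]; simpl.
  - unfold Rpower. reg.
  - apply continuity_plus; [exact IH|]. unfold Rpower. reg.
Qed.

Lemma Rpower_0_r x : Rpower x 0 = 1.
Proof. unfold Rpower. rewrite Rmult_0_l. apply exp_0. Qed.

Lemma exponent_exists (p : nat -> R) m k : (1 <= m)%nat -> 1 <= k ->
  (forall i, (i <= m)%nat -> 0 < p i) -> sum_f_R0 p m = 1 ->
  exists s, 0 < s <= 1 /\ sum_f_R0 (fun i => Rpower (p i) s) m = Rpower k s.
Proof.
  intros Hm Hk Hp Hsum.
  set (g := fun s => Rpower k s - sum_f_R0 (fun i => Rpower (p i) s) m).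
  assert (Hg : continuity g).
  { apply continuity_minus; [unfold Rpower; reg|apply continuity_sum_Rpower]. }
  assert (Hg0 : g 0 = - INR m).
  { unfold g. rewrite Rpower_0_r.
    rewrite (sum_eq _ (fun _ => 1)) by (intros; apply Rpower_0_r).
    rewrite sum_cte, S_INR. ring. }
  assert (Hg1 : g 1 = k - 1).
  { unfold g. rewrite Rpower_1 by lra.
    rewrite (sum_eq _ p) by (intros i Hi; apply Rpower_1, Hp, Hi).
    rewrite Hsum. ring. }
  assert (HINR : 1 <= INR m) by (apply (le_INR 1); exact Hm).
  destruct (Req_dec k 1) as [Hk1|Hk1].
  - exists 1. split; [lra|]. apply eq_sym, Rminus_diag_uniq. change (g 1 = 0). lra.
  - destruct (IVT g 0 1 Hg ltac:(lra) ltac:(lra) ltac:(lra)) as [s [Hs Hgs]].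
    exists s. split.
    + split; [|lra]. destruct (Req_dec s 0) as [->|]; lra.
    + apply eq_sym, Rminus_diag_uniq. exact Hgs.
Qed.

Lemma Rpower_div x y s : 0 < x -> 0 < y -> Rpower (x / y) s = Rpower x s / Rpower y s.
Proof.
  intros Hx Hy. unfold Rpower, Rdiv.
  rewrite ln_mult, ln_Rinv, <- exp_Ropp, <- exp_plus by (try apply Rinv_0_lt_compat; lra).
  f_equal. ring.
Qed.

Lemma exponent_le (p : nat -> R) m k s : (1 <= m)%nat -> 1 <= k -> 0 <= s <= 1 ->
  (forall i, (i <= m)%nat -> 0 < p i) -> sum_f_R0 p m = 1 ->
  sum_f_R0 (fun i => Rpower (p i) s) m = Rpower k s ->
  s <= ln (INR (S m)) / ln (INR (S m) * k).
Proof.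
  intros Hm Hk Hs Hp Hsum Hroot. set (c := INR (S m)).
  assert (Hc : 2 <= c) by (apply (le_INR 2); lia).
  pose proof (sum_Rpower_le p m s Hs Hp Hsum) as Hmean. fold c in Hmean.
  rewrite Hroot, Rpower_mult_distr in Hmean by lra.
  apply ln_le_compat in Hmean; [|apply exp_pos].
  rewrite ln_Rpower, ln_mult in Hmean by lra.
  rewrite ln_mult by lra.
  assert (Hlnc : 0 < ln c) by (rewrite <- ln_1; apply ln_increasing; lra).
  assert (Hlnk : 0 <= ln k) by (rewrite <- ln_1; apply ln_le_compat; lra).
  apply Rmult_le_reg_r with (ln c + ln k); [lra|].
  unfold Rdiv. rewrite Rmult_assoc, Rinv_l by lra. lra.
Qed.

Lemma le_INR_up_to_nat x : 0 < x -> x <= INR (Z.to_nat (up x)).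
Proof.
  intros Hx. destruct (archimed x) as [Hup _].
  assert (0 <= up x)%Z by (apply le_IZR; lra).
  rewrite INR_IZR_INZ, Z2Nat.id by lia. lra.
Qed.

Lemma finite_family_lower_bound (a : nat -> R) m :
  (forall i, (i <= m)%nat -> 0 < a i) ->
  exists q, 0 < q /\ forall i, (i <= m)%nat -> q <= a i.
Proof.
  induction m as [|m IH]; intros Ha.
  - exists (a 0%nat). split; [apply Ha; lia|]. intros i Hi.
    replace i with 0%nat by lia. lra.
  - destruct IH as [q [Hq Hqa]]; [intros i Hi; apply Ha; lia|].
    exists (Rmin q (a (S m))). split.
    + apply Rmin_glb_lt; [lra|apply Ha; lia].
    + intros i Hi. destruct (Nat.eq_dec i (S m)) as [->|Hne].
      * apply Rmin_r.
      * eapply Rle_trans; [apply Rmin_l|apply Hqa; lia].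
Qed.

Section DNTree.
Variables (t k : R) (p : nat -> R).
Hypotheses (ht : 0 < t) (hk : 1 <= k) (hp : forall i, (i <= 3)%nat -> 0 < p i < 1).

Lemma Tf_S f n r : Tf (S f) t k p n r =
  if Rle_dec n (t * k ^ r) then 1
  else 1 + sum_f_R0 (fun i => Tf f t k p (p i * (n - t * k ^ r)) (S r)) 3.
Proof. reflexivity. Qed.

Lemma child_div_pow i n r :
  p i * (n - t * k ^ r) / k ^ S r = p i / k * (n / k ^ r - t).
Proof. pose proof (pow_R1_Rle k r hk). simpl. field. lra. Qed.

Lemma child_div_threshold i n r :
  p i * (n - t * k ^ r) / (t * k ^ S r) = p i / k * (n / (t * k ^ r) - 1).
Proof. pose proof (pow_R1_Rle k r hk). simpl. field. lra. Qed.

Lemma Tf_le_pow5 f : forall n r m, n / k ^ r <= t * INR m -> Tf f t k p n r <= 5 ^ m.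
Proof.
  induction f as [|f IH]; intros n r m Hn.
  - simpl. apply pow_R1_Rle. lra.
  - rewrite Tf_S. destruct (Rle_dec n (t * k ^ r)) as [Hleaf|Hsplit].
    { apply pow_R1_Rle. lra. }
    pose proof (pow_R1_Rle k r hk) as Hkr.
    assert (Hx : t < n / k ^ r) by (apply Rdiv_lt_r; lra).
    destruct m as [|m]; [simpl in Hn; lra|].
    rewrite S_INR in Hn.
    assert (Hchild : forall i, (i <= 3)%nat -> Tf f t k p (p i * (n - t * k ^ r)) (S r) <= 5 ^ m).
    { intros i Hi. apply IH. rewrite child_div_pow.
      destruct (hp i Hi) as [Hpi0 Hpi1].
      assert (p i / k <= 1) by (apply Rdiv_le_l; lra).
      assert (0 < p i / k) by (apply Rdiv_lt_0_compat; lra). nra. }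
    apply sum_Rle in Hchild. rewrite sum_cte in Hchild.
    simpl INR in Hchild. simpl pow. pose proof (pow_R1_Rle 5 m ltac:(lra)). lra.
Qed.

Section Exponent.
Variable s : R.
Hypotheses (hs : 0 <= s <= 1) (hroot : sum_f_R0 (fun i => Rpower (p i / k) s) 3 = 1).

Lemma Tf_lower f : forall n r, n <= t * INR f -> Rpower (n / (t * k ^ r)) s <= Tf f t k p n r.
Proof.
  assert (Hthr : forall r, 0 < t * k ^ r) by (intros r; pose proof (pow_R1_Rle k r hk); nra).
  assert (Hleaf : forall n r, n <= t * k ^ r -> Rpower (n / (t * k ^ r)) s <= 1).
  { intros n r Hn. pose proof (Hthr r). apply Rpower_le_1; [apply Rdiv_le_l|]; lra. }
  induction f as [|f IH]; intros n r Hn; pose proof (Hthr r).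
  - apply Hleaf. simpl in Hn. lra.
  - rewrite Tf_S. destruct (Rle_dec n (t * k ^ r)) as [Hle|Hgt]; [now apply Hleaf|].
    set (y := n / (t * k ^ r)).
    assert (Hy : 1 < y) by (apply Rdiv_lt_r; lra).
    rewrite S_INR in Hn.
    assert (Hchild : forall i, (i <= 3)%nat ->
      Rpower (p i / k) s * Rpower (y - 1) s <= Tf f t k p (p i * (n - t * k ^ r)) (S r)).
    { intros i Hi. destruct (hp i Hi) as [Hpi0 Hpi1].
      rewrite Rpower_mult_distr by (try apply Rdiv_lt_0_compat; lra).
      unfold y. rewrite <- child_div_threshold. apply IH.
      pose proof (pow_R1_Rle k r hk). nra. }
    apply sum_Rle in Hchild. rewrite <- scal_sum, hroot, Rmult_1_r in Hchild.
    pose proof (Rpower_plus_le (y - 1) 1 s ltac:(lra) ltac:(lra) hs) as Hsub.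
    rewrite Rpower_1_l in Hsub. replace (y - 1 + 1) with y in Hsub by ring.
    lra.
Qed.

Section UpperBound.
Variables (q A : R) (M : nat).
Hypotheses (hq : 0 < q) (hq_child : forall i, (i <= 3)%nat -> q <= p i / k)
  (hM : t + 1 <= t * INR M) (hA : 5 ^ M + / 3 <= A * Rpower q s).

(* The slack [/3] pays for the root: [1 + 4 * (- /3) = - /3]. *)
Lemma Tf_upper f : forall n r, q <= n / k ^ r ->
  Tf f t k p n r <= A * Rpower (n / k ^ r) s - / 3.
Proof.
  assert (HA : 0 < A).
  { pose proof (exp_pos (s * ln q)). pose proof (pow_R1_Rle 5 M ltac:(lra)).
    unfold Rpower in hA. nra. }
  assert (Hmono : forall x, q <= x -> A * Rpower q s <= A * Rpower x s).
  { intros x Hx. apply Rmult_le_compat_l; [lra|]. apply Rle_Rpower_l; lra. }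
  induction f as [|f IH]; intros n r Hx; set (x := n / k ^ r) in *;
    pose proof (Hmono x Hx); pose proof (pow_R1_Rle 5 M ltac:(lra)).
  - simpl. lra.
  - destruct (Rle_dec x (t + 1)) as [Hsmall|Hlarge].
    { pose proof (Tf_le_pow5 (S f) n r M) as Hbound. fold x in Hbound.
      specialize (Hbound ltac:(lra)). lra. }
    pose proof (pow_R1_Rle k r hk) as Hkr.
    rewrite Tf_S. destruct (Rle_dec n (t * k ^ r)) as [Hleaf|_].
    { assert (x <= t) by (apply Rdiv_le_l; lra). lra. }
    assert (Hchild : forall i, (i <= 3)%nat -> Tf f t k p (p i * (n - t * k ^ r)) (S r)
      <= Rpower (p i / k) s * (A * Rpower (x - t) s) + - / 3).
    { intros i Hi. destruct (hp i Hi) as [Hpi0 Hpi1].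
      assert (Hqi := hq_child i Hi).
      replace (Rpower (p i / k) s * (A * Rpower (x - t) s))
        with (A * Rpower (p i * (n - t * k ^ r) / k ^ S r) s).
      - apply IH. rewrite child_div_pow. fold x. nra.
      - rewrite child_div_pow. fold x.
        rewrite <- Rpower_mult_distr by (try apply Rdiv_lt_0_compat; lra). ring. }
    apply sum_Rle in Hchild.
    rewrite sum_plus, sum_cte, <- scal_sum, hroot in Hchild. simpl INR in Hchild.
    assert (Rpower (x - t) s <= Rpower x s) by (apply Rle_Rpower_l; lra).
    nra.
Qed.

End UpperBound.

Lemma T_lower N : 0 < N -> Rpower (/ t) s * Rpower N s <= T t k p N 0.
Proof.
  intros HN. unfold T.
  rewrite Rpower_mult_distr by (try apply Rinv_0_lt_compat; lra).
  replace (/ t * N) with (N / (t * k ^ 0)) by (simpl; field; lra).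
  apply Tf_lower. rewrite plus_INR.
  pose proof (le_INR_up_to_nat (N / t) ltac:(apply Rdiv_lt_0_compat; lra)).
  replace N with (t * (N / t)) at 1 by (field; lra). simpl INR. nra.
Qed.

Lemma T_upper : exists A, 0 < A /\ forall N, 1 <= N -> T t k p N 0 <= A * Rpower N s.
Proof.
  destruct (finite_family_lower_bound (fun i => p i / k) 3) as [q [Hq Hqp]].
  { intros i Hi. destruct (hp i Hi). apply Rdiv_lt_0_compat; lra. }
  set (M := Z.to_nat (up ((t + 1) / t))).
  assert (HM : t + 1 <= t * INR M).
  { pose proof (le_INR_up_to_nat ((t + 1) / t) ltac:(apply Rdiv_lt_0_compat; lra)) as Hup.
    fold M in Hup. replace (t + 1) with (t * ((t + 1) / t)) at 1 by (field; lra). nra. }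
  set (A := (5 ^ M + / 3) / Rpower q s).
  assert (HqA : 5 ^ M + / 3 <= A * Rpower q s).
  { unfold A. right. field. apply Rgt_not_eq, exp_pos. }
  assert (HA : 0 < A).
  { apply Rdiv_lt_0_compat; [|apply exp_pos]. pose proof (pow_R1_Rle 5 M). lra. }
  exists A. split; [exact HA|]. intros N HN.
  assert (Hq1 : q <= 1).
  { destruct (hp 0%nat ltac:(lia)). pose proof (Hqp 0%nat ltac:(lia)).
    assert (p 0%nat / k <= 1) by (apply Rdiv_le_l; lra). lra. }
  pose proof (Tf_upper q A M Hq Hqp HM HqA (Z.to_nat (up (N / t)) + 1) N 0) as Hup.
  replace (N / k ^ 0) with N in Hup by (simpl; field). unfold T. lra.
Qed.

End Exponent.
End DNTree.

Theorem theorem2 (t k : R) (p : nat -> R)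
  (ht : 0 < t) (hk : 1 <= k)
  (hp : forall i : nat, (i <= 3)%nat -> 0 < p i < 1)
  (hsum : sum_f_R0 p 3 = 1) :
  exists s : R,
    0 < s /\ s <= ln 4 / ln (4 * k) /\
    sum_f_R0 (fun i => Rpower (p i) s) 3 = Rpower k s /\
    exists c1 c2 N0 : R, 0 < c1 /\ 0 < c2 /\
      forall N : R, N0 <= N ->
        c1 * Rpower N s <= T t k p N 0 <= c2 * Rpower N s.
Proof.
  assert (hpos : forall i, (i <= 3)%nat -> 0 < p i) by (intros i Hi; apply hp, Hi).
  destruct (exponent_exists p 3 k ltac:(lia) hk hpos hsum) as [s [Hs Hroot]].
  assert (Hscaled : sum_f_R0 (fun i => Rpower (p i / k) s) 3 = 1).
  { rewrite (sum_eq _ (fun i => Rpower (p i) s * / Rpower k s))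
      by (intros i Hi; apply Rpower_div; [apply hpos, Hi|lra]).
    rewrite <- scal_sum, Hroot. apply Rinv_l, Rgt_not_eq, exp_pos. }
  exists s. split; [lra|]. split.
  { replace 4 with (INR (S 3)) by (simpl; ring).
    apply (exponent_le p); auto; lra. }
  split; [exact Hroot|].
  destruct (T_upper t k p ht hk hp s ltac:(lra) Hscaled) as [A [HA Hupper]].
  exists (Rpower (/ t) s), A, 1. split; [apply exp_pos|]. split; [exact HA|].
  intros N HN. split.
  - apply T_lower; auto; lra.
  - apply Hupper, HN.
Qed.
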